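(* Let $(X,d)$ be a metric space and let $u\in F_{USCG}(X)$. Then $P_0(u)=P(u)$, and $P(u)$ is at most countable.
   Context: A fuzzy set on $X$ is a function $u:X\to[0,1]$, with $\alpha$-cuts $[u]_\alpha=\{x: u(x)\ge\alpha\}$ for $\alpha\in(0,1]$ and $[u]_0=\overline{\{u>0\}}$. $F_{USC}(X)$ is the set of fuzzy sets with all $\alpha$-cuts ($\alpha\in[0,1]$) non-empty and closed; $F_{USCG}(X)=\{u\in F_{USC}(X): [u]_\alpha \text{ is compact for all } \alpha\in(0,1]\}$. $H$ denotes the Hausdorff metric on non-empty closed subsets of $X$: $H(U,V)=\max\{\sup_{u\in U}d(u,V),\sup_{v\in V}d(v,U)\}$. A number $\alpha\in(0,1)$ is a platform point of $u$ if $\overline{\{u>\alpha\}}\subsetneqq[u]_\alpha$; $P(u)$ is the set of platform points of $u$. $P_0(u)=\{\alpha\in(0,1): \lim_{\beta\to\alpha}H([u]_\beta,[u]_\alpha)\neq 0\}$, i.e. the set of $\alpha\in(0,1)$ at which it is not the case that $H([u]_\beta,[u]_\alpha)\to0$ as $\beta\to\alpha$. *)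

(* R : realType, (X, d) : metricType R with d = mdist. *)
From HB Require Import structures.
From mathcomp Require Import all_boot all_order all_algebra.
From mathcomp Require Import all_classical all_reals all_analysis.
Set Implicit Arguments. Unset Strict Implicit. Unset Printing Implicit Defensive.
Import Order.TTheory GRing.Theory Num.Theory.
Import numFieldNormedType.Exports.
Local Open Scope classical_set_scope.
Local Open Scope ring_scope.

Section Fuzzy.
Context {R : realType} {X : metricType R}.

Definition fuzzy_set (u : X -> R) : Prop := forall x, 0 <= u x <= 1.

Definition cut (u : X -> R) (a : R) : set X :=
  if a == 0 then closure [set x | 0 < u x] else [set x | a <= u x].

Definition F_USC (u : X -> R) : Prop :=
  fuzzy_set u /\
  forall a : R, 0 <= a <= 1 -> cut u a !=set0 /\ closed (cut u a).

Definition F_USCG (u : X -> R) : Prop :=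
  F_USC u /\ forall a : R, 0 < a <= 1 -> compact (cut u a).

Definition dist_set (x : X) (V : set X) : \bar R :=
  ereal_inf [set (mdist x v)%:E | v in V].

Definition hausdorff_dist (U V : set X) : \bar R :=
  maxe (ereal_sup [set dist_set x V | x in U])
       (ereal_sup [set dist_set y U | y in V]).

Definition platform_points (u : X -> R) : set R :=
  [set a | 0 < a < 1 /\ closure [set x | a < u x] `<` cut u a].

Definition P0_points (u : X -> R) : set R :=
  [set a | 0 < a < 1 /\
     ~ ((fun b => hausdorff_dist (cut u b) (cut u a)) @ a^' --> (0 : \bar R))].

End Fuzzy.

From Pilot Require Import Defs.
From HB Require Import structures.
From mathcomp Require Import all_boot all_order all_algebra.
From mathcomp Require Import all_classical all_reals all_analysis.
From mathcomp Require Import lra.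
Import Order.TTheory GRing.Theory Num.Theory.
Import numFieldNormedType.Exports.
Local Open Scope classical_set_scope.
Local Open Scope ring_scope.

(* If [a] is not a platform point, every point of [[u]_a] is a limit of
   points where [u > a]; with the openness of the sublevel sets [{u < c}] this
   makes [[u]_b] and [[u]_a] mutually [e]-close near each point once [b] is
   close to [a], and compactness of [[u]_(a/2)], which contains all these
   cuts, makes this uniform, so [H([u]_b, [u]_a) -> 0]. If [a] is a platform
   point, some [x] with [u x = a] is at distance at least [r > 0] from
   [{u > a}], hence from every [[u]_b] with [b > a], so [H([u]_b, [u]_a) >= r].
   Such an [x] is a local maximum of [u] with value [a]; for a fixed lower
   bound on [a] and on [r] these maxima are [r]-separated points of a compact
   cut, hence finitely many, and [P(u)] is a countable union of such sets. *)

Section ereal_limits.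
Context {R : realType}.

Lemma cvge0_le {T} {F : set_system T} {FF : Filter F} (f : T -> \bar R) :
  (forall e, 0 < e -> \forall t \near F, (0 <= f t <= e%:E)%E) -> f @ F --> 0%:E.
Proof.
move=> fe; apply/fine_cvgP; split.
  apply: filterS (fe 1 ltr01) => t /andP[f0 f1].
  by rewrite ge0_fin_numE// (le_lt_trans f1)// ltry.
apply/cvgrPdist_le => e e0; apply: filterS (fe e e0) => t /andP[f0 fe'] /=.
rewrite sub0r normrN ger0_norm ?fine_ge0// -lee_fin fineK//.
by rewrite ge0_fin_numE// (le_lt_trans fe')// ltry.
Qed.

Lemma cvg_dnbhs_at_right (f : R -> \bar R) (a : R) (l : \bar R) :
  f @ a^' --> l -> f @ a^'+ --> l.
Proof.
apply: cvg_trans; apply: cvg_fmap2; apply: within_subset => b /=.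
by rewrite lt_def => /andP[].
Qed.

End ereal_limits.

Section metric_facts.
Context {R : realType} {X : metricType R}.
Implicit Types (U V : set X) (x y : X) (e r : R).

Lemma not_closure_mdist {A : set X} {x} :
  ~ closure A x -> exists2 r, 0 < r & forall z, A z -> r <= mdist x z.
Proof.
rewrite /closure => /existsNP[B /not_implyP[/nbhs_ballP[r r0 rB] AB0]].
exists r => // z Az; rewrite leNgt; apply/negP => xz; apply: AB0.
by exists z; split => //; apply: rB; rewrite ballEmdist.
Qed.

Lemma dist_set_le_mdist x {V} {v} : V v -> (dist_set x V <= (mdist x v)%:E)%E.
Proof.
by move=> Vv; apply: ge_ereal_inf; exists (mdist x v)%:E => //; exists v.
Qed.

Lemma dist_set_ge0 x V : (0 <= dist_set x V)%E.
Proof. by apply: le_ereal_inf_tmp => _ [v Vv <-]; rewrite lee_fin mdist_ge0. Qed.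

Lemma hausdorff_dist_ge0 U V : V !=set0 -> (0 <= hausdorff_dist U V)%E.
Proof.
move=> [y Vy]; rewrite /hausdorff_dist le_max; apply/orP; right.
apply: le_ereal_sup_tmp; exists (dist_set y U); first by exists y.
exact: dist_set_ge0.
Qed.

Lemma hausdorff_dist_ge U V y r : V y ->
  (forall z, U z -> r <= mdist y z) -> (r%:E <= hausdorff_dist U V)%E.
Proof.
move=> Vy yU; rewrite /hausdorff_dist le_max; apply/orP; right.
apply: le_ereal_sup_tmp; exists (dist_set y U); first by exists y.
by apply: le_ereal_inf_tmp => _ [z Uz <-]; rewrite lee_fin yU.
Qed.

Lemma hausdorff_dist_le U V e :
  (forall x, U x -> exists2 y, V y & mdist x y < e) ->
  (forall y, V y -> exists2 x, U x & mdist y x < e) ->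
  (hausdorff_dist U V <= e%:E)%E.
Proof.
have sup_le (A B : set X) : (forall x, A x -> exists2 y, B y & mdist x y < e) ->
    (ereal_sup [set dist_set x B | x in A] <= e%:E)%E.
  move=> AB; apply: ge_ereal_sup => _ [x Ax <-]; have [y By xy] := AB x Ax.
  by rewrite (le_trans (dist_set_le_mdist x By))// lee_fin ltW.
by move=> UV VU; rewrite /hausdorff_dist ge_max !sup_le.
Qed.

(* Compactness against the filter of finite sequences ordered by inclusion
   yields a finite [e/2]-net [s] of [K]; mapping [a] to the index in [s] of the
   first point [e/2]-close to [h a] is then injective on [A]. *)
Lemma compact_separated_countable {T} {K : set X} {A : set T} (h : T -> X) {e} :
  compact K -> 0 < e -> (forall a, A a -> K (h a)) ->
  (forall a b, A a -> A b -> mdist (h a) (h b) < e -> a = b) -> countable A.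
Proof.
move=> cK e0 hK hsep; have e20 : 0 < e / 2 by rewrite divr_gt0.
pose supseq (s : seq X) := [set t : seq X | {subset s <= t}].
have Fsupseq : Filter (filter_from setT supseq).
  apply: filter_from_filter; first by exists [::].
  move=> s t _ _; exists (s ++ t) => // w /= stw.
  by split => z zs; apply: stw; rewrite mem_cat zs ?orbT.
have [s _ net] : \forall t \near filter_from setT supseq,
    K `<=` [set y | has (fun z => mdist z y < e / 2) t].
  move/compact_near_coveringP: cK; apply => // x Kx.
  exists (ball x (e / 2), supseq [:: x]).
    by split; [exact: nbhsx_ballx | exists [:: x]].
  move=> [y t] /= [xy xt]; apply/hasP; exists x; last by rewrite ballEmdist in xy.
  by apply: xt; rewrite mem_head.
have {}net := net s (fun z => id).
apply/countable_injP; exists (fun a => find (fun z => mdist z (h a) < e / 2) s).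
move=> a b /set_mem Aa /set_mem Ab /= eq_find; apply: hsep => //.
have := nth_find (h a) (net _ (hK a Aa)).
have := nth_find (h a) (net _ (hK b Ab)).
rewrite -eq_find; set z := nth (h a) s _ => zb za.
rewrite (le_lt_trans (metric_triangle _ z _))// [e]splitr ltrD//.
by rewrite metric_sym.
Qed.

End metric_facts.

Section platform_points.
Context {R : realType} {X : metricType R} (u : X -> R).
Hypothesis hu : F_USCG u.

Local Notation H b a := (hausdorff_dist (Defs.cut u b) (Defs.cut u a)).

Lemma cutE b : b != 0 -> Defs.cut u b = [set x | b <= u x].
Proof. by move=> b0; rewrite /Defs.cut (negbTE b0). Qed.

Lemma cut_le_sub {a b} : 0 < a -> a <= b -> Defs.cut u b `<=` Defs.cut u a.
Proof.
move=> a0 ab; rewrite !cutE ?gt_eqF ?(lt_le_trans a0)// => x /=.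
exact: le_trans.
Qed.

Lemma fuzzy_ge0 (x : X) : 0 <= u x.
Proof. by have /andP[] := hu.1.1 x. Qed.

Lemma cut_neq0 a : 0 <= a <= 1 -> Defs.cut u a !=set0.
Proof. by move=> a01; have [] := hu.1.2 a a01. Qed.

Lemma compact_cut {a} : 0 < a <= 1 -> compact (Defs.cut u a).
Proof. exact: hu.2. Qed.

Lemma open_sublevel c : 0 < c <= 1 -> open [set x | u x < c].
Proof.
move=> /andP[c0 c1]; have [_] := hu.1.2 c (introT andP (conj (ltW c0) c1)).
rewrite cutE ?gt_eqF// => /closed_openC.
rewrite (_ : ~` _ = [set x | u x < c])//.
by apply/seteqP; split => x /=; rewrite ltNge => /negP.
Qed.

Lemma closure_gt_sub_cut a : 0 < a <= 1 ->
  closure [set x | a < u x] `<=` Defs.cut u a.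
Proof.
move=> /andP[a0 a1]; have [_ cl] := hu.1.2 a (introT andP (conj (ltW a0) a1)).
rewrite ((closure_id _).1 cl); apply: closureS => x /= ax.
by rewrite cutE ?gt_eqF// /= ltW.
Qed.

Definition level_approx e b a y :=
  b <= u y -> exists2 z, a <= u z & mdist y z < e.

Lemma level_approx_near a e (x : X) : 0 < a < 1 -> 0 < e ->
  Defs.cut u a `<=` closure [set x | a < u x] ->
  \forall y \near x & b \near a^', level_approx e b a y /\ level_approx e a b y.
Proof.
move=> /andP[a0 a1] e0 a_closure; have [uxa|aux] := ltP (u x) a.
  pose c := (u x + a) / 2; have uxc : u x < c by rewrite /c; lra.
  have ca : c < a by rewrite /c; lra.
  exists ([set y | u y < c], [set b | c < b]).
    split; last by apply: nbhs_dnbhs; exact: lt_nbhsr.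
    apply: open_nbhs_nbhs; split => //; apply: open_sublevel.
    by rewrite (le_lt_trans (fuzzy_ge0 x) uxc) /= ltW// (lt_trans ca).
  by move=> [y b] /= [uyc cb]; split => /= h; lra.
have e20 : 0 < e / 2 by rewrite divr_gt0.
have xa : Defs.cut u a x by rewrite cutE ?gt_eqF.
have [z [/= azu xz]] := a_closure x xa _ (nbhsx_ballx x (e / 2) e20).
exists (ball x (e / 2), [set b | b < u z]).
  by split; [exact: nbhsx_ballx | apply: nbhs_dnbhs; exact: lt_nbhsl].
move=> [y b] /= [xy bz]; rewrite ballEmdist /= in xy xz.
split => _.
  by exists x => //; rewrite metric_sym (lt_trans xy)//; lra.
exists z; first exact: ltW.
by rewrite (le_lt_trans (metric_triangle _ x _))// [e]splitr ltrD// metric_sym.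
Qed.

Lemma hausdorff_cut_near_le a e : 0 < a < 1 -> 0 < e ->
  Defs.cut u a `<=` closure [set x | a < u x] ->
  \forall b \near a^', (0 <= H b a <= e%:E)%E.
Proof.
move=> a01 e0 a_closure; have /andP[a0 a1] := a01; pose c := a / 2.
have c0 : 0 < c by rewrite divr_gt0.
have ca : c < a by rewrite /c; lra.
have cK : compact (Defs.cut u c) by apply: compact_cut; rewrite c0 /=; lra.
have : \forall b \near a^',
    Defs.cut u c `<=` fun y => level_approx e b a y /\ level_approx e a b y.
  by move/compact_near_coveringP: cK; apply => x _; exact: level_approx_near.
apply: filter_app; near=> b => cover.
have : b \in `]c, 1[.
  by near: b; apply: nbhs_dnbhs; apply: near_in_itvoo; rewrite in_itv /= ca.
rewrite in_itv /= => /andP[cb b1].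
apply/andP; split; first by apply/hausdorff_dist_ge0/cut_neq0; rewrite ltW// ltW.
apply: hausdorff_dist_le.
  move=> x bx; have [+ _] := cover x (cut_le_sub c0 (ltW cb) x bx).
  rewrite cutE ?gt_eqF ?(lt_trans c0)// in bx => /(_ bx)[z az xz].
  by exists z; rewrite ?cutE ?gt_eqF.
move=> y ay; have [_ +] := cover y (cut_le_sub c0 (ltW ca) y ay).
rewrite cutE ?gt_eqF// in ay => /(_ ay)[z bz yz].
by exists z; rewrite ?cutE ?gt_eqF ?(lt_trans c0).
Unshelve. all: by end_near.
Qed.

Lemma hausdorff_cut_cvg0 a : 0 < a < 1 ->
  Defs.cut u a `<=` closure [set x | a < u x] -> (fun b => H b a) @ a^' --> 0%:E.
Proof.
by move=> a01 a_closure; apply: cvge0_le => e e0; exact: hausdorff_cut_near_le.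
Qed.

Lemma platform_point_isolated {a} : platform_points u a ->
  exists x r, [/\ 0 < r, u x = a & forall y, mdist x y < r -> u y <= a].
Proof.
move=> [/andP[a0 _] [_ not_sub]].
have [x ax xn] : exists2 x, Defs.cut u a x & ~ closure [set x | a < u x] x.
  apply: contrapT => none; apply: not_sub => x ax; apply: contrapT => xn.
  by apply: none; exists x.
have [r r0 far] := not_closure_mdist xn.
have near_le y : mdist x y < r -> u y <= a.
  by move=> xy; rewrite leNgt; apply/negP => /far; rewrite leNgt xy.
exists x, r; split => //; apply/eqP; rewrite eq_le near_le ?mdistxx//.
by rewrite cutE ?gt_eqF in ax.
Qed.

Lemma platform_point_not_cvg0 {a} : platform_points u a ->
  ~ (fun b => H b a) @ a^' --> 0%:E.
Proof.
move=> Pa; have [x [r [r0 uxa near_le]]] := platform_point_isolated Pa.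
have a0 : 0 < a by case: Pa => /andP[].
move=> /cvg_dnbhs_at_right/cvge_to_ge lim_ge.
suff : (r%:E <= 0%:E)%E by rewrite lee_fin leNgt r0.
apply: lim_ge; near=> b; apply: (hausdorff_dist_ge _ _ x).
  by rewrite cutE ?gt_eqF//= uxa.
have ab : a < b by near: b; exact: nbhs_right_gt.
move=> z; rewrite cutE ?gt_eqF ?(lt_trans a0)// => bz.
by rewrite leNgt; apply/negP => /near_le; rewrite leNgt (lt_le_trans ab bz).
Unshelve. all: by end_near.
Qed.

Lemma P0_pointsE : P0_points u = platform_points u.
Proof.
apply/seteqP; split => a.
  move=> [a01 not_cvg]; have /andP[a0 a1] := a01; split => //; split.
    by apply: closure_gt_sub_cut; rewrite a0 ltW.
  by move=> a_closure; apply: not_cvg; exact: hausdorff_cut_cvg0.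
by move=> Pa; split; [case: Pa | exact: platform_point_not_cvg0].
Qed.

Definition local_max_levels c r := [set a | c <= a /\
  exists x, u x = a /\ forall y, mdist x y < r -> u y <= a].

Lemma countable_local_max_levels c r : 0 < c <= 1 -> 0 < r ->
  countable (local_max_levels c r).
Proof.
move=> c01 r0.
have [x0 _] : Defs.cut u 1 !=set0 by apply: cut_neq0; rewrite ler01 lexx.
have witness a : exists x, local_max_levels c r a ->
    u x = a /\ forall y, mdist x y < r -> u y <= a.
  have [[_ [x hx]]|nI] := pselect (local_max_levels c r a); first by exists x.
  by exists x0 => /nI.
have [h hh] := choice witness.
have /andP[c0 _] := c01.
apply: (compact_separated_countable h (compact_cut c01) r0).
  by move=> a la; rewrite cutE ?gt_eqF//= (hh a la).1; case: la.
move=> a b la lb ab; apply/eqP; rewrite eq_le.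
have := (hh b lb).2 (h a); rewrite metric_sym (hh a la).1 => -> //.
by have := (hh a la).2 (h b) ab; rewrite (hh b lb).1 => ->.
Qed.

Lemma platform_points_sub_local_max : platform_points u `<=`
  \bigcup_(nk in [set: nat * nat]) local_max_levels nk.1.+1%:R^-1 nk.2.+1%:R^-1.
Proof.
move=> a Pa; have [x [r [r0 uxa near_le]]] := platform_point_isolated Pa.
have a0 : 0 < a by case: Pa => /andP[].
have [n /ltW na] : exists n, n.+1%:R^-1 < a.
  by have [n] := ltr_add_invr a0; rewrite add0r; exists n.
have [k /ltW kr] : exists k, k.+1%:R^-1 < r.
  by have [k] := ltr_add_invr r0; rewrite add0r; exists k.
exists (n, k) => //; split => //; exists x; split => // y xy.
by apply: near_le; exact: lt_le_trans kr.
Qed.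

Lemma countable_platform_points : countable (platform_points u).
Proof.
apply: sub_countable (subset_card_le platform_points_sub_local_max) _.
apply: bigcup_countable => // nk _; apply: countable_local_max_levels.
  by rewrite invr_gt0 ltr0Sn invf_le1// ler1n.
by rewrite invr_gt0.
Qed.

End platform_points.

Theorem lemma3p5 (R : realType) (X : metricType R) (u : X -> R) :
  F_USCG u -> P0_points u = platform_points u /\ countable (platform_points u).
Proof.
by move=> hu; split; [exact: P0_pointsE | exact: countable_platform_points].
Qed.
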